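(* Let $\Sigma$ be a real symmetric positive definite $n\times n$ matrix, let \[\mathcal S(\Sigma)=\{(\hat\Sigma,\tilde\Sigma)\mid \Sigma=\hat\Sigma+\tilde\Sigma,\ \hat\Sigma\ge0,\ \tilde\Sigma\ge 0,\ \tilde\Sigma\text{ diagonal}\},\] let $(\hat\Sigma_{\rm opt},\tilde\Sigma_{\rm opt})$ be the (unique) maximizer over $\mathcal S(\Sigma)$ of $\operatorname{trace}(\hat\Sigma-\hat\Sigma\Sigma^{-1}\hat\Sigma)$, and let $R_{\rm opt}=\hat\Sigma_{\rm opt}-\hat\Sigma_{\rm opt}\Sigma^{-1}\hat\Sigma_{\rm opt}$. Then for every $(\hat\Sigma,\tilde\Sigma)\in\mathcal S(\Sigma)$, \[\operatorname{trace}\big((\hat\Sigma-\hat\Sigma_{\rm opt})\Sigma^{-1}(\hat\Sigma-\hat\Sigma_{\rm opt})'\big)\le\operatorname{trace}(R_{\rm opt}).\]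
   Context: All matrices are real symmetric $n\times n$; $M\ge0$ means positive semidefinite. The maximizer $\hat\Sigma_{\rm opt}$ is also the maximizer of $\min_K L(K,\hat\Sigma,\tilde\Sigma)$ with $L(K,\hat\Sigma,\tilde\Sigma)=\operatorname{trace}(\hat\Sigma-K\hat\Sigma-\hat\Sigma K'+K(\hat\Sigma+\tilde\Sigma)K')$. *)

From HB Require Import structures.
From mathcomp Require Import all_boot all_order all_algebra.
Set Implicit Arguments. Unset Strict Implicit. Unset Printing Implicit Defensive.
Import Order.TTheory GRing.Theory Num.Theory.
Local Open Scope ring_scope.

Definition psd (R : realFieldType) (n : nat) (A : 'M[R]_n) : Prop :=
  A^T = A /\ forall v : 'cV[R]_n, 0 <= (v^T *m A *m v) 0 0.

Definition pd (R : realFieldType) (n : nat) (A : 'M[R]_n) : Prop :=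
  A^T = A /\ forall v : 'cV[R]_n, v != 0 -> 0 < (v^T *m A *m v) 0 0.

Definition inS (R : realFieldType) (n : nat) (Sigma Sh St : 'M[R]_n) : Prop :=
  Sigma = Sh + St /\ psd Sh /\ psd St /\ is_diag_mx St.

Definition objective (R : realFieldType) (n : nat) (Sigma Sh : 'M[R]_n) : R :=
  \tr (Sh - Sh *m invmx Sigma *m Sh).

(* With P = Sigma^-1, the objective f(S) = tr (S - S P S) is a concave quadratic, and the
   feasible set is convex.  Along the segment from the maximizer S_o towards a feasible S,
   write S_o + t D with D = S - S_o; then f(S_o + t D) = f(S_o) + t a - t^2 tr (D P D), and
   maximality at t = 0 forces the slope a to be nonpositive.  Evaluating at t = 1 and using
   f(S) >= 0 (S - S P S is a sum of two congruences of psd matrices) gives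
   tr (D P D) <= f(S_o) + a <= f(S_o). *)
From HB Require Import structures.
From mathcomp Require Import all_boot all_order all_algebra.
From mathcomp Require Import ring lra.
Import Order.TTheory GRing.Theory Num.Theory.
Local Open Scope ring_scope.

Set Implicit Arguments.

Section PsdMatrices.
Variables (R : realFieldType) (n : nat).
Implicit Types A B M : 'M[R]_n.

Lemma mxtrace_psd_conj_ge0 A M : psd A -> 0 <= \tr (M *m A *m M^T).
Proof.
move=> [_ A_ge0]; rewrite /mxtrace; apply: sumr_ge0 => i _.
have -> : (M *m A *m M^T) i i = ((row i M)^T^T *m A *m (row i M)^T) 0 0.
  rewrite !mxE; apply: eq_bigr => j _; rewrite !mxE; congr (_ * _).
  by apply: eq_bigr => k _; rewrite !mxE.
exact: A_ge0.
Qed.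

Lemma pd_unitmx A : pd A -> A \in unitmx.
Proof.
move=> [_ A_gt0]; rewrite unitmxE unitfE; apply/negP => /det0P [v v_neq0 vA0].
have : 0 < (v^T^T *m A *m v^T) 0 0.
  by apply: A_gt0; rewrite -(inj_eq (@trmx_inj _ _ _)) trmxK trmx0.
by rewrite trmxK vA0 mul0mx mxE ltxx.
Qed.

Lemma psd_invmx A : pd A -> psd (invmx A).
Proof.
move=> pdA; have A_unit := pd_unitmx pdA; case: pdA => symA A_gt0.
have symP : (invmx A)^T = invmx A by rewrite trmx_inv symA.
split => // v; set w := invmx A *m v.
have -> : v^T *m invmx A *m v = w^T *m A *m w.
  rewrite /w trmx_mul symP -!mulmxA [A *m _]mulmxA mulmxV // mul1mx.
  by rewrite mulmxA.
have [->|w_neq0] := eqVneq w 0; first by rewrite mulmx0 mxE.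
exact/ltW/A_gt0.
Qed.

Lemma psd_lerp A B t : psd A -> psd B -> 0 <= t <= 1 -> psd (A + t *: (B - A)).
Proof.
move=> [symA A_ge0] [symB B_ge0] /andP[t_ge0 t_le1].
have -> : A + t *: (B - A) = (1 - t) *: A + t *: B.
  by rewrite scalerBr scalerBl scale1r addrCA addrC.
split; first by rewrite linearD /= !linearZ /= symA symB.
move=> v; rewrite mulmxDr mulmxDl -!scalemxAr -!scalemxAl.
rewrite mxE [X in _ + X]mxE [X in X + _]mxE.
by apply: addr_ge0; apply: mulr_ge0; rewrite ?subr_ge0.
Qed.

Lemma is_diag_mx_lerp A B t :
  is_diag_mx A -> is_diag_mx B -> is_diag_mx (A + t *: (B - A)).
Proof.
move=> /is_diag_mxP A0 /is_diag_mxP B0; apply/is_diag_mxP => i j ij.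
by rewrite !mxE A0 // B0 // subrr mulr0 addr0.
Qed.

End PsdMatrices.

Section Objective.
Variables (R : realFieldType) (n : nat) (Sigma : 'M[R]_n).
Implicit Types Sh St X D : 'M[R]_n.
Local Notation P := (invmx Sigma).

Lemma inS_lerp Sh St Sh' St' t : inS Sigma Sh St -> inS Sigma Sh' St' -> 0 <= t <= 1 ->
  inS Sigma (Sh + t *: (Sh' - Sh)) (St + t *: (St' - St)).
Proof.
move=> [e [psdSh [psdSt diagSt]]] [e' [psdSh' [psdSt' diagSt']]] t01.
split; last split; last split.
- by rewrite addrACA -scalerDr addrACA -opprD -e -e' subrr scaler0 addr0.
- exact: psd_lerp.
- exact: psd_lerp.
- exact: is_diag_mx_lerp.
Qed.

Lemma objective_line X D t : objective Sigma (X + t *: D) =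
  objective Sigma X + t * (\tr D - \tr (X *m P *m D) - \tr (D *m P *m X))
  - t ^+ 2 * \tr (D *m P *m D).
Proof.
rewrite /objective !(mulmxDl, mulmxDr) -!(scalemxAl, scalemxAr) !scalerA.
rewrite !(mxtraceD, raddfB, raddfN) /= !mxtraceD !mxtraceZ; ring.
Qed.

(* S - S P S = (1 - S P) S (1 - S P)^T + (S P) T (S P)^T when S + T = Sigma. *)
Lemma objective_ge0 Sh St : pd Sigma -> inS Sigma Sh St -> 0 <= objective Sigma Sh.
Proof.
move=> pdS [e [psdSh [psdSt _]]].
have PS : P *m Sigma = 1%:M by rewrite mulVmx // pd_unitmx.
have symP : P^T = P by case: (psd_invmx pdS).
have symSh : Sh^T = Sh by case: psdSh.
have := addr_ge0 (mxtrace_psd_conj_ge0 (1%:M - Sh *m P) psdSh)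
                 (mxtrace_psd_conj_ge0 (Sh *m P) psdSt).
have -> : St = Sigma - Sh by rewrite e addrC addKr.
rewrite linearB /= trmx1 trmx_mul symP symSh /objective.
rewrite !(mulmxBl, mulmxBr, mul1mx, mulmx1, mulmxA) -[Sh *m P *m Sigma]mulmxA PS mulmx1.
rewrite !(mxtraceD, raddfN, raddfB) /=; lra.
Qed.

End Objective.

Lemma slope_le0_of_max_at0 (R : realFieldType) (a b : R) : 0 <= b ->
  (forall t : R, 0 < t <= 1 -> t * a - t ^+ 2 * b <= 0) -> a <= 0.
Proof.
move=> b_ge0 max0; rewrite leNgt; apply/negP => a_gt0.
have ab_gt0 : 0 < a + b by lra.
(* At t = a / (a + b) the quadratic equals t (a - t b) = t^2 a > 0. *)
set t := a / (a + b).
have t_gt0 : 0 < t by rewrite divr_gt0.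
have t_le1 : t <= 1 by rewrite ler_pdivrMr // mul1r; lra.
have tab : t * a + t * b = a by rewrite -mulrDr mulfVK // gt_eqF.
have := max0 t; rewrite t_gt0 t_le1 expr2 -mulrA -mulrBr => /(_ isT).
have -> : a - t * b = t * a by lra.
by rewrite leNgt (mulr_gt0 t_gt0 (mulr_gt0 t_gt0 a_gt0)).
Qed.

Unset Implicit Arguments.

Theorem proposition13 (R : realFieldType) (n : nat) (Sigma Sh_opt St_opt : 'M[R]_n) :
  pd Sigma ->
  inS Sigma Sh_opt St_opt ->
  (forall Sh St : 'M[R]_n, inS Sigma Sh St -> objective Sigma Sh <= objective Sigma Sh_opt) ->
  forall Sh St : 'M[R]_n, inS Sigma Sh St ->
    \tr ((Sh - Sh_opt) *m invmx Sigma *m (Sh - Sh_opt)^T)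
      <= \tr (Sh_opt - Sh_opt *m invmx Sigma *m Sh_opt).
Proof.
move=> pdS feas_opt opt Sh St feas.
set D := Sh - Sh_opt; set P := invmx Sigma.
set a := \tr D - \tr (Sh_opt *m P *m D) - \tr (D *m P *m Sh_opt).
have b_ge0 : 0 <= \tr (D *m P *m D^T) := mxtrace_psd_conj_ge0 D (psd_invmx pdS).
have symD : D^T = D.
  case: feas => _ [[symSh _] _]; case: feas_opt => _ [[symSo _] _].
  by rewrite linearB /= symSh symSo.
rewrite symD in b_ge0 *.
have a_le0 : a <= 0.
  apply: slope_le0_of_max_at0 b_ge0 _ => t /andP[t_gt0 t_le1].
  have t01 : 0 <= t <= 1 by rewrite (ltW t_gt0) t_le1.
  have := opt _ _ (inS_lerp t feas_opt feas t01).
  rewrite objective_line -/D -/P -/a; lra.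
have := objective_ge0 pdS feas.
have -> : Sh = Sh_opt + 1 *: D by rewrite scale1r addrC subrK.
rewrite objective_line -/a expr1n !mul1r /objective -/P; lra.
Qed.
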